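(* Let $m\ge2$ be an integer, let $a,b\in\mathbb{Q}_m$ and $c=a+b$. Let $\{s_n(a)\}_{n\ge0}$, $\{s_n(b)\}_{n\ge0}$, $\{s_n(c)\}_{n\ge0}$ be sequences with values in $\{0,1,\dots,m-1\}$ such that $a=\sum_{n=0}^\infty\left(\frac{m}{m+1}\right)^n s_n(a)$, $b=\sum_{n=0}^\infty\left(\frac{m}{m+1}\right)^n s_n(b)$ and $c=\sum_{n=0}^\infty\left(\frac{m}{m+1}\right)^n s_n(c)$ in $\mathbb{Q}_m$. Define $\kappa_0=0$ and, for $n\ge0$, $$\kappa_{n+1}=\kappa_n+\left\lfloor\frac{s_n(a)+s_n(b)+\kappa_n}{m}\right\rfloor.$$ Then $s_n(c)\equiv s_n(a)+s_n(b)+\kappa_n\pmod m$ for every $n\ge0$.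
   Context: $D_m$ is the set of rationals $a/b$ (with $a,b$ coprime integers) such that $\gcd(b,m)=1$; it is a subring of $\mathbb{Q}$. For $a/b\in D_m$ in lowest terms, $|a/b|_m=m^{-k}$ where $k$ is the largest integer with $m^k\mid a$, and $|0|_m=0$; the metric is $d(u,v)=|u-v|_m$. $\mathbb{Q}_m$ is the Cauchy completion of $(D_m,d)$, with ring operations extended by continuity; $D_m$ is identified with its image in $\mathbb{Q}_m$. *)

From HB Require Import structures.
From mathcomp Require Import all_boot all_order all_algebra.
Set Implicit Arguments. Unset Strict Implicit. Unset Printing Implicit Defensive.
Import Order.TTheory GRing.Theory Num.Theory.
Local Open Scope ring_scope.

Definition inDm (m : nat) (q : rat) : bool := coprime `|denq q|%N m.

(* m-adic valuation of the numerator: the largest k with m^k | a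
   (meaningful for m >= 2 and a <> 0). *)
Definition mval (m : nat) (q : rat) : nat :=
  \max_(k < `|numq q|%N.+1 | (m ^ k %| `|numq q|)%N) k.

Definition mnorm (m : nat) (q : rat) : rat :=
  if q == 0 then 0 else (m%:R ^- mval m q).

Definition mdist (m : nat) (u v : rat) : rat := mnorm m (u - v).

Definition mcauchy (m : nat) (x : nat -> rat) : Prop :=
  forall eps : rat, 0 < eps -> exists N : nat,
    forall i j : nat, (N <= i)%N -> (N <= j)%N -> mdist m (x i) (x j) < eps.

(* Q_m, the Cauchy completion of (D_m, d): an element is represented by a
   Cauchy sequence of elements of D_m; two representatives denote the same
   element of Q_m iff their difference tends to 0 (see Qm_eq). *)
Record Qm (m : nat) := MkQm {
  qseq : nat -> rat;
  qseq_Dm : forall n, inDm m (qseq n);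
  qseq_cauchy : mcauchy m qseq }.

Definition mnull_diff (m : nat) (x y : nat -> rat) : Prop :=
  forall eps : rat, 0 < eps -> exists N : nat,
    forall n : nat, (N <= n)%N -> mdist m (x n) (y n) < eps.

Definition Qm_eq (m : nat) (a b : Qm m) : Prop := mnull_diff m (qseq a) (qseq b).

(* c = a + b in Q_m (addition extended by continuity: the class of the
   pointwise sum of representatives) *)
Definition Qm_is_sum (m : nat) (c a b : Qm m) : Prop :=
  mnull_diff m (qseq c) (fun n => qseq a n + qseq b n).

Definition mpartial (m : nat) (s : nat -> nat) (N : nat) : rat :=
  \sum_(n < N) (m%:R / (m.+1)%:R) ^+ n * (s n)%:R.

(* the series sum_n (m/(m+1))^n s_n converges to a in Q_m:
   the sequence of partial sums (in D_m) converges to a in the completion,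
   i.e. d(partial_N, x_N) -> 0 for a representative x of a. *)
Definition mseries_to (m : nat) (s : nat -> nat) (a : Qm m) : Prop :=
  mnull_diff m (mpartial m s) (qseq a).

Fixpoint kappa (m : nat) (sa sb : nat -> nat) (n : nat) : nat :=
  match n with
  | 0 => 0
  | n'.+1 => (kappa m sa sb n' + (sa n' + sb n' + kappa m sa sb n') %/ m)%N
  end.

(* Write [mdvdq m k x] for membership of [x] in the ideal [m^k D_m].  Since
   (m/(m+1))^j = m^j/(m+1)^j and m+1 is a unit of D_m, the tail of a digit
   series from position j on lies in m^j D_m.  Adding the series of a and b
   digit by digit, with the carries kappa, gives the series of the digits
   (s_n(a) + s_n(b) + kappa_n) mod m up to a carry term in m^N D_m.  As the
   series of a, b and c converge in Q_m, the partial sums of c and of these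
   digits eventually differ by an element of m^(n+1) D_m.  If the digits agree
   below n, that difference is (m/(m+1))^n times the difference of the n-th
   digits plus an element of m^(n+1) D_m, so m divides the difference of the
   n-th digits, which are therefore equal. *)
From mathcomp Require Import all_boot all_order all_algebra.
From mathcomp Require Import ring zify.
Set Implicit Arguments. Unset Strict Implicit. Unset Printing Implicit Defensive.
Import Order.TTheory GRing.Theory Num.Theory.
Local Open Scope ring_scope.

Section DmArithmetic.
Variable m : nat.

Lemma inDmP (x : rat) :
  inDm m x <-> exists (z : int) (d : nat), [/\ (0 < d)%N, coprime d m & x = z%:~R / d%:R].
Proof.
split => [Dx | [z [d [d_gt0 dm ->]]]].
  exists (numq x), `|denq x|%N; split => //; first by rewrite absz_gt0 denq_neq0.
  by rewrite -[LHS]divq_num_den -[in LHS]absz_denq -pmulrn.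
set y := z%:~R / d%:R.
have d_neq0 : (d%:R : rat) != 0 by rewrite pnatr_eq0 -lt0n.
have num_den : numq y * d%:Z = z * denq y.
  apply/eqP; rewrite -(eqr_int rat) !intrM numqE -pmulrn /y; apply/eqP.
  by field.
have : (`|denq y| %| `|numq y| * d)%N.
  by rewrite -(absz_nat d) -abszM num_den abszM dvdn_mull.
rewrite Gauss_dvdr; last by rewrite coprime_sym coprime_num_den.
by move/coprime_dvdl; apply.
Qed.

Lemma inDm_nat (n : nat) : inDm m n%:R.
Proof.
by apply/inDmP; exists n%:Z, 1%N; rewrite coprime1n divr1 pmulrn.
Qed.

Lemma inDmV_nat (d : nat) : coprime d m -> inDm m d%:R^-1.
Proof.
move=> dm; have [->|d_gt0] := posnP d; first by rewrite invr0 (inDm_nat 0).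
by apply/inDmP; exists 1, d; rewrite mul1r.
Qed.

Lemma inDmN (x : rat) : inDm m x -> inDm m (- x).
Proof.
move=> /inDmP[z [d [d_gt0 dm ->]]].
by apply/inDmP; exists (- z), d; rewrite intrN mulNr.
Qed.

Lemma inDmD (x y : rat) : inDm m x -> inDm m y -> inDm m (x + y).
Proof.
move=> /inDmP[z1 [d1 [d1_gt0 d1m ->]]] /inDmP[z2 [d2 [d2_gt0 d2m ->]]].
apply/inDmP; exists (z1 * d2%:Z + z2 * d1%:Z), (d1 * d2)%N.
split; [by rewrite muln_gt0 d1_gt0 | by rewrite coprimeMl d1m |].
have d1_neq0 : (d1%:R : rat) != 0 by rewrite pnatr_eq0 -lt0n.
have d2_neq0 : (d2%:R : rat) != 0 by rewrite pnatr_eq0 -lt0n.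
by rewrite intrD !intrM natrM !pmulrn; field; rewrite d1_neq0 d2_neq0.
Qed.

Lemma inDmM (x y : rat) : inDm m x -> inDm m y -> inDm m (x * y).
Proof.
move=> /inDmP[z1 [d1 [d1_gt0 d1m ->]]] /inDmP[z2 [d2 [d2_gt0 d2m ->]]].
apply/inDmP; exists (z1 * z2), (d1 * d2)%N.
split; [by rewrite muln_gt0 d1_gt0 | by rewrite coprimeMl d1m |].
by rewrite intrM natrM invfM; ring.
Qed.

Definition mdvdq (k : nat) (x : rat) : Prop :=
  exists2 y, inDm m y & x = m%:R ^+ k * y.

Lemma mdvdq0 (x : rat) : mdvdq 0 x <-> inDm m x.
Proof. by split => [[y Dy ->] | Dx]; [rewrite mul1r | exists x; rewrite ?mul1r]. Qed.

Lemma mdvdqD k (x y : rat) : mdvdq k x -> mdvdq k y -> mdvdq k (x + y).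
Proof. by move=> [x' Dx ->] [y' Dy ->]; exists (x' + y'); rewrite ?inDmD ?mulrDr. Qed.

Lemma mdvdqN k (x : rat) : mdvdq k x -> mdvdq k (- x).
Proof. by move=> [x' Dx ->]; exists (- x'); rewrite ?inDmN ?mulrN. Qed.

Lemma mdvdqB k (x y : rat) : mdvdq k x -> mdvdq k y -> mdvdq k (x - y).
Proof. by move=> kx ky; apply: mdvdqD kx (mdvdqN ky). Qed.

Lemma mdvdqM k l (x y : rat) : mdvdq k x -> mdvdq l y -> mdvdq (k + l) (x * y).
Proof.
move=> [x' Dx ->] [y' Dy ->]; exists (x' * y'); first exact: inDmM.
by rewrite exprD; ring.
Qed.

Lemma mdvdq_le k l (x : rat) : (k <= l)%N -> mdvdq l x -> mdvdq k x.
Proof.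
move=> kl [y Dy ->]; exists (m%:R ^+ (l - k) * y).
  by rewrite inDmM // -natrX inDm_nat.
by rewrite mulrA -exprD subnKC.
Qed.

Lemma mdvdq_sum k (I : Type) (r : seq I) (P : pred I) (F : I -> rat) :
  (forall i, P i -> mdvdq k (F i)) -> mdvdq k (\sum_(i <- r | P i) F i).
Proof.
move=> kF; apply: (big_ind (mdvdq k)) => //; last exact: mdvdqD.
by exists 0; rewrite ?mulr0 // (inDm_nat 0).
Qed.

Lemma mdvdq_mulKn k l (x : rat) : (0 < m)%N ->
  mdvdq (k + l) (m%:R ^+ k * x) -> mdvdq l x.
Proof.
move=> m_gt0 [y Dy e]; exists y => //.
apply: (mulfI (x := m%:R ^+ k)); first by rewrite expf_neq0 // pnatr_eq0 -lt0n.
by rewrite e exprD mulrA.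
Qed.

Lemma mdvdq_int k (z : int) : mdvdq k z%:~R -> (m ^ k %| `|z|)%N.
Proof.
move=> [y /inDmP[z' [d [d_gt0 dm ->]]] e].
have d_neq0 : (d%:R : rat) != 0 by rewrite pnatr_eq0 -lt0n.
have ez : z * d%:Z = (m ^ k)%:Z * z'.
  apply/eqP; rewrite -(eqr_int rat) !intrM -!pmulrn e natrX; apply/eqP.
  by field.
rewrite -(@Gauss_dvdl _ _ d); last by rewrite coprime_sym coprimeXr.
by rewrite -(absz_nat d) -abszM ez abszM absz_nat dvdn_mulr.
Qed.

Lemma mval_dvd (q : rat) : (m ^ mval m q %| `|numq q|)%N.
Proof.
rewrite /mval; apply: (big_ind (fun k => m ^ k %| `|numq q|)%N) => //.
by move=> i j hi hj; rewrite /maxn; case: ltnP.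
Qed.

Lemma mdvdq_mnorm_lt k (x : rat) : (1 < m)%N ->
  inDm m x -> mnorm m x < m%:R ^- k -> mdvdq k x.
Proof.
move=> m_gt1 Dx; rewrite /mnorm; have [-> _ | x_neq0] := eqVneq x 0.
  by exists 0; rewrite ?mulr0 // (inDm_nat 0).
have m_gt1' : 1 < (m%:R : rat) by rewrite ltr1n.
rewrite ltf_pV2 ?posrE ?exprn_gt0 ?(lt_trans ltr01) // ltr_eXn2l // => k_lt.
have : ((m ^ k)%:Z %| numq x)%Z.
  by rewrite dvdzE absz_nat (dvdn_trans _ (mval_dvd x)) // dvdn_exp2l // ltnW.
case/dvdzP => z num_x; exists (z%:~R / `|denq x|%:R).
  apply/inDmP; exists z, `|denq x|%N; split => //.
  by rewrite absz_gt0 denq_neq0.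
rewrite -[LHS]divq_num_den -[in LHS]absz_denq -pmulrn num_x intrM.
by rewrite -pmulrn natrX mulrA (mulrC z%:~R).
Qed.

End DmArithmetic.

Lemma mdvdq_ratioXMn m j p : mdvdq m j ((m%:R / m.+1%:R) ^+ j * p%:R).
Proof.
exists ((m.+1 ^ j)%:R^-1 * p%:R); last by rewrite expr_div_n natrX mulrA.
by rewrite inDmM ?inDm_nat // inDmV_nat // coprimeXl // coprimeSn.
Qed.

Lemma mdvdq_mpartialB m (s : nat -> nat) k n N : (k <= n)%N -> (n <= N)%N ->
  mdvdq m k (mpartial m s N - mpartial m s n).
Proof.
move=> kn nN; rewrite /mpartial.
rewrite -!(big_mkord xpredT (fun j => (m%:R / m.+1%:R) ^+ j * (s j)%:R)).
rewrite (big_cat_nat (leq0n n) nN) /= addrC addrK big_nat_cond.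
apply: mdvdq_sum => j /andP[/andP[nj _] _].
exact: mdvdq_le (leq_trans kn nj) (mdvdq_ratioXMn m j (s j)).
Qed.

Lemma inDm_mpartial m (s : nat -> nat) N : inDm m (mpartial m s N).
Proof.
apply/mdvdq0; rewrite -[mpartial m s N]subr0.
by have := mdvdq_mpartialB m s (leqnn 0) (leq0n N); rewrite /mpartial big_ord0.
Qed.

Lemma eq_digit_mdvdq m (s t : nat -> nat) n N : (0 < m)%N -> (n < N)%N ->
  (s n < m)%N -> (t n < m)%N -> (forall j, (j < n)%N -> s j = t j) ->
  mdvdq m n.+1 (mpartial m s N - mpartial m t N) -> s n = t n.
Proof.
move=> m_gt0 nN sn tn st_prefix st_close.
set r := m%:R / m.+1%:R : rat.
have mpartialS u : mpartial m u n.+1 = mpartial m u n + r ^+ n * (u n)%:R.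
  by rewrite /mpartial big_ord_recr.
have st_low : mpartial m s n = mpartial m t n.
  by apply: eq_bigr => j _; rewrite st_prefix.
have d_n : mdvdq m (n + 1) (m%:R ^+ n * ((m.+1 ^ n)%:R^-1 * ((s n)%:Z - (t n)%:Z)%:~R)).
  rewrite addn1 mulrA natrX -expr_div_n -/r.
  have -> : r ^+ n * ((s n)%:Z - (t n)%:Z)%:~R =
      (mpartial m s N - mpartial m t N)
      - (mpartial m s N - mpartial m s n.+1) + (mpartial m t N - mpartial m t n.+1).
    by rewrite !mpartialS st_low intrB -!pmulrn; ring.
  by apply: mdvdqD; [apply: mdvdqB => // |]; apply: mdvdq_mpartialB.
have /mdvdq_int : mdvdq m (1 + 0) ((s n)%:Z - (t n)%:Z)%:~R.
  rewrite -[_%:~R](mulVKf (x := (m.+1 ^ n)%:R)) ?pnatr_eq0 ?expn_eq0 // mulrC.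
  apply: mdvdqM (mdvdq_mulKn m_gt0 d_n) _.
  exact/mdvdq0/inDm_nat.
rewrite expn1 => m_dvd.
have : `|(s n)%:Z - (t n)%:Z|%N = 0%N.
  apply/eqP; apply: contraT; rewrite -lt0n => /dvdn_leq /(_ m_dvd); lia.
by move/eqP; rewrite absz_eq0 subr_eq0 => /eqP [].
Qed.

Lemma mnull_diff_mdvdq m (x y : nat -> rat) k : (1 < m)%N ->
  (forall n, inDm m (x n)) -> (forall n, inDm m (y n)) -> mnull_diff m x y ->
  exists N, forall n, (N <= n)%N -> mdvdq m k (x n - y n).
Proof.
move=> m_gt1 Dx Dy xy; have [|N closeN] := xy (m%:R ^- k).
  by rewrite invr_gt0 exprn_gt0 // ltr0n ltnW.
exists N => n Nn; apply: mdvdq_mnorm_lt (closeN n Nn) => //.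
exact: inDmD (inDmN _).
Qed.

Section Carries.
Variables (m : nat) (sa sb : nat -> nat).

Definition sum_digit (n : nat) : nat := ((sa n + sb n + kappa m sa sb n) %% m)%N.

(* A carry of [q] out of position [j] is worth [m q r^j = (m+1) q r^(j+1)],
   where [r = m/(m+1)]. *)
Lemma mpartialD_carry N : (0 < m)%N ->
  mpartial m sa N + mpartial m sb N =
  mpartial m sum_digit N + (m%:R / m.+1%:R) ^+ N * (m.+1 * kappa m sa sb N)%:R.
Proof.
move=> m_gt0; elim: N => [|N IH].
  by rewrite /mpartial !big_ord0 /= muln0 mulr0 !addr0.
rewrite /mpartial !big_ord_recr /= -!/(mpartial _ _ _).
rewrite addrACA IH.
set k := kappa m sa sb N.
have digitE : (sum_digit N)%:R = (sa N + sb N + k)%:R - ((sa N + sb N + k) %/ m * m)%:R :> rat.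
  by apply/eqP; rewrite /sum_digit -/k eq_sym subr_eq -natrD [(_ %% m + _)%N]addnC -divn_eq.
rewrite digitE !natrM !natrD exprS.
have m1_neq0 : (m.+1%:R : rat) != 0 by rewrite pnatr_eq0.
rewrite -addn1 natrD in m1_neq0 *; field; exact: m1_neq0.
Qed.

End Carries.

Lemma mpartial_sum_digit_close m (a b c : Qm m) (sa sb sc : nat -> nat) :
  (1 < m)%N -> Qm_is_sum c a b ->
  mseries_to sa a -> mseries_to sb b -> mseries_to sc c ->
  forall k, exists N, forall n, (N <= n)%N ->
    mdvdq m k (mpartial m sc n - mpartial m (sum_digit m sa sb) n).
Proof.
move=> m_gt1 hc ha hb hcs k.
have Dq (x : Qm m) n : inDm m (qseq x n) := qseq_Dm x n.
have Dp s n : inDm m (mpartial m s n) := inDm_mpartial m s n.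
have [Nc close_c] := mnull_diff_mdvdq k m_gt1 (Dp sc) (Dq c) hcs.
have [Nab close_ab] :=
  mnull_diff_mdvdq k m_gt1 (Dq c) (fun n => inDmD (Dq a n) (Dq b n)) hc.
have [Na close_a] := mnull_diff_mdvdq k m_gt1 (Dp sa) (Dq a) ha.
have [Nb close_b] := mnull_diff_mdvdq k m_gt1 (Dp sb) (Dq b) hb.
exists (maxn (maxn Nc Nab) (maxn (maxn Na Nb) k)) => n Nn.
set carry : rat := (m%:R / m.+1%:R) ^+ n * (m.+1 * kappa m sa sb n)%:R.
have carry_k : mdvdq m k carry.
  by apply: mdvdq_le (mdvdq_ratioXMn m n _); lia.
have -> : mpartial m sc n - mpartial m (sum_digit m sa sb) n =
    (mpartial m sc n - qseq c n) + (qseq c n - (qseq a n + qseq b n))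
    - (mpartial m sa n - qseq a n) - (mpartial m sb n - qseq b n) + carry.
  rewrite -[carry](addKr (mpartial m (sum_digit m sa sb) n)).
  by rewrite -mpartialD_carry ?(ltnW m_gt1) //; ring.
apply: mdvdqD carry_k; apply: mdvdqB; last by apply: close_b; lia.
by apply: mdvdqB; [apply: mdvdqD; [apply: close_c | apply: close_ab] | apply: close_a]; lia.
Qed.

Theorem mainTheorem12 (m : nat) (hm : (2 <= m)%N) (a b c : Qm m)
  (hc : Qm_is_sum c a b)
  (sa sb sc : nat -> nat)
  (hsa : forall n, (sa n < m)%N) (hsb : forall n, (sb n < m)%N)
  (hsc : forall n, (sc n < m)%N)
  (ha : mseries_to sa a) (hb : mseries_to sb b) (hcs : mseries_to sc c) :
  forall n : nat, sc n = (sa n + sb n + kappa m sa sb n)%N %[mod m].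
Proof.
have m_gt0 : (0 < m)%N by apply: ltnW.
suff sc_digits n : sc n = sum_digit m sa sb n by move=> n; rewrite sc_digits modn_mod.
elim/ltn_ind: n => n IH.
have [N close] := mpartial_sum_digit_close hm hc ha hb hcs n.+1.
apply: (@eq_digit_mdvdq m _ _ n (maxn N n.+1)) => //.
- by rewrite leq_max ltnSn orbT.
- exact: ltn_pmod.
- by apply: close; rewrite leq_maxl.
Qed.
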